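(* Let $H\in(\tfrac12,1)$, $\beta\in(1-2H,1]$, $\tau=T/M$, $t_i=i\tau$, and fix $m\in\{1,\dots,M\}$. With $R(z)=(1+z)^{-1}$ set $\mathcal T_N(i):=E_N(t_m-t_i)-R(\tau A_N)^{m-i}$ for $i=0,\dots,m-1$. Then there is a constant $C$ independent of $N,M,m$ and $x$ such that for all $x\in V$, $$\sum_{i,j=0}^{m-1}\int_{t_j}^{t_{j+1}}\int_{t_i}^{t_{i+1}}\big\langle\mathcal T_N(i)P_Nx,\;\mathcal T_N(j)P_Nx\big\rangle\,\phi(u-v)\,\mathrm du\,\mathrm dv\le C\,\tau^{2H+\beta-1}\|A_N^{\frac{\beta-1}{2}}P_Nx\|^2 .$$
   Context: $(V,\langle\cdot,\cdot\rangle,\|\cdot\|)$ is a real separable Hilbert space; $A$ is a linear, densely defined, positive self-adjoint unbounded operator with compact inverse, orthonormal eigenbasis $(e_i)$, $Ae_i=\lambda_ie_i$, $0<\lambda_1\le\lambda_2\le\dots\to\infty$. $P_N$ is the orthogonal projection onto $\mathrm{span}\{e_1,\dots,e_N\}$, $A_N=AP_N$ (with fractional powers taken on $\mathrm{span}\{e_1,\dots,e_N\}$), $E_N(t)=e^{-tA_N}$, and $R(\tau A_N)=(I+\tau A_N)^{-1}$. $\phi(y)=H(2H-1)|y|^{2H-2}$. *)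

From Stdlib Require Import Reals Lra.
Open Scope R_scope.

Record HilbertSpace := {
  hs :> Type;
  hzero : hs;
  hadd : hs -> hs -> hs;
  hopp : hs -> hs;
  hscal : R -> hs -> hs;
  hinner : hs -> hs -> R;
  hadd_assoc : forall x y z, hadd x (hadd y z) = hadd (hadd x y) z;
  hadd_comm : forall x y, hadd x y = hadd y x;
  hadd_zero : forall x, hadd x hzero = x;
  hadd_opp : forall x, hadd x (hopp x) = hzero;
  hscal_one : forall x, hscal 1 x = x;
  hscal_assoc : forall a b x, hscal a (hscal b x) = hscal (a * b) x;
  hscal_distr_v : forall a x y, hscal a (hadd x y) = hadd (hscal a x) (hscal a y);
  hscal_distr_s : forall a b x, hscal (a + b) x = hadd (hscal a x) (hscal b x);
  hinner_sym : forall x y, hinner x y = hinner y x;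
  hinner_add : forall x y z, hinner (hadd x y) z = hinner x z + hinner y z;
  hinner_scal : forall a x y, hinner (hscal a x) y = a * hinner x y;
  hinner_pos : forall x, 0 <= hinner x x;
  hinner_def : forall x, hinner x x = 0 -> x = hzero;
  hcomplete : forall u : nat -> hs,
    (forall eps, eps > 0 -> exists n0, forall p q, (p >= n0)%nat -> (q >= n0)%nat ->
        sqrt (hinner (hadd (u p) (hopp (u q))) (hadd (u p) (hopp (u q)))) < eps) ->
    exists l, forall eps, eps > 0 -> exists n0, forall n, (n >= n0)%nat ->
        sqrt (hinner (hadd (u n) (hopp l)) (hadd (u n) (hopp l))) < eps
}.

Arguments hzero {_}. Arguments hadd {_}. Arguments hopp {_}.
Arguments hscal {_}. Arguments hinner {_}.

Definition hsub {V : HilbertSpace} (x y : V) : V := hadd x (hopp y).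
Definition hnorm {V : HilbertSpace} (x : V) : R := sqrt (hinner x x).

Fixpoint sumR (n : nat) (f : nat -> R) : R :=
  match n with O => 0 | S n' => sumR n' f + f n' end.

Fixpoint vsum {V : HilbertSpace} (n : nat) (f : nat -> V) : V :=
  match n with O => hzero | S n' => hadd (vsum n' f) (f n') end.

(* ---------- Spectral data of A ----------
   e k, lam k (k = 0,1,2,...) stand for e_{k+1}, lambda_{k+1} of the paper. *)

(* functional calculus of A_N on span{e_1..e_N}:
   g(A_N) y = sum_{k<N} g(lambda_k) <y,e_k> e_k *)
Definition funcalc {V : HilbertSpace} (e : nat -> V) (lam : nat -> R)
  (N : nat) (g : R -> R) (y : V) : V :=
  vsum N (fun k => hscal (g (lam k) * hinner y (e k)) (e k)).

Definition PN {V : HilbertSpace} (e : nat -> V) (N : nat) (x : V) : V :=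
  vsum N (fun k => hscal (hinner x (e k)) (e k)).

Definition EN {V : HilbertSpace} e lam N (t : R) (y : V) : V :=
  funcalc e lam N (fun l => exp (- t * l)) y.

Definition RNpow {V : HilbertSpace} e lam N (tau : R) (n : nat) (y : V) : V :=
  funcalc e lam N (fun l => (/ (1 + tau * l)) ^ n) y.

Definition ANpow {V : HilbertSpace} e lam N (s : R) (y : V) : V :=
  funcalc e lam N (fun l => Rpower l s) y.

Definition TN {V : HilbertSpace} e lam N (tau : R) (m i : nat) (y : V) : V :=
  hsub (EN e lam N (INR m * tau - INR i * tau) y) (RNpow e lam N tau (m - i) y).

Definition phi (H y : R) : R := H * (2 * H - 1) * Rpower (Rabs y) (2 * H - 2).

(* continuous truncations phi_n increasing to phi (pointwise, y <> 0) *)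
Definition phi_trunc (H : R) (n : nat) (y : R) : R :=
  H * (2 * H - 1) * Rpower (Rmax (Rabs y) (/ INR (S n))) (2 * H - 2).

Definition RInt_is (f : R -> R) (a b v : R) : Prop :=
  exists pr : Riemann_integrable f a b, RiemannInt pr = v.

(* I = int_c^d int_a^b phi(u - v) du dv, defined (phi >= 0, singular on the
   diagonal) as the monotone limit of the iterated Riemann integrals of the
   continuous truncations phi_n. *)
Definition dbl_int_phi (H a b c d I : R) : Prop :=
  exists J : nat -> R, Un_cv J I /\
    forall n, exists F : R -> R,
      (forall v, RInt_is (fun u => phi_trunc H n (u - v)) a b (F v)) /\
      RInt_is F c d (J n).

From Stdlib Require Import Reals Lra Lia.
From Coquelicot Require Import Coquelicot.
Open Scope R_scope.

(* In the eigenbasis, <T_N(i) y, T_N(j) y> = sum_k c_k(i) c_k(j) <y, e_k>^2 with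
   c_k(i) = e^{-(m-i) z_k} - (1 + z_k)^{-(m-i)} and z_k = tau lam_k.  Since
   e^{-z} <= 1/(1+z), every c_k(i) is <= 0, so all these products are nonnegative
   and each block integral of phi may be replaced by its uniform bound
   C tau^{2H-1} tau (an integral of |u - v|^{2H-2} over an interval of length tau
   is at most 2 tau^{2H-1} / (2H-1), whatever v).  The double sum then collapses
   to C tau^{2H} sum_k (sum_i c_k(i))^2 <y, e_k>^2.  Summing two geometric series,
   |sum_i c_k(i)| <= 1/z - e^{-z}/(1 - e^{-z}) <= min(1, 1/z), and
   min(1, 1/z)^2 <= z^{beta-1} because -2 <= beta - 1 <= 0. *)

Lemma sumR_ext (n : nat) (f g : nat -> R) :
  (forall k, (k < n)%nat -> f k = g k) -> sumR n f = sumR n g.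
Proof.
  induction n as [|n IH]; intros Hfg; simpl; [reflexivity|].
  rewrite IH by (intros; apply Hfg; lia). rewrite Hfg by lia. reflexivity.
Qed.

Lemma sumR_le (n : nat) (f g : nat -> R) :
  (forall k, (k < n)%nat -> f k <= g k) -> sumR n f <= sumR n g.
Proof.
  induction n as [|n IH]; intros Hfg; simpl; [lra|].
  apply Rplus_le_compat; [apply IH; intros; apply Hfg; lia | apply Hfg; lia].
Qed.

Lemma sumR_const0 (n : nat) : sumR n (fun _ => 0) = 0.
Proof. induction n as [|n IH]; simpl; [|rewrite IH]; ring. Qed.

Lemma sumR_ge0 (n : nat) (f : nat -> R) :
  (forall k, (k < n)%nat -> 0 <= f k) -> 0 <= sumR n f.
Proof. intros Hf. rewrite <- (sumR_const0 n). now apply sumR_le. Qed.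

Lemma sumR_mull (n : nat) (c : R) (f : nat -> R) :
  sumR n (fun k => c * f k) = c * sumR n f.
Proof. induction n as [|n IH]; simpl; [|rewrite IH]; ring. Qed.

Lemma sumR_add (n : nat) (f g : nat -> R) :
  sumR n (fun k => f k + g k) = sumR n f + sumR n g.
Proof. induction n as [|n IH]; simpl; [|rewrite IH]; ring. Qed.

Lemma sumR_sub (n : nat) (f g : nat -> R) :
  sumR n (fun k => f k - g k) = sumR n f - sumR n g.
Proof. induction n as [|n IH]; simpl; [|rewrite IH]; ring. Qed.

Lemma sumR_swap (n m : nat) (f : nat -> nat -> R) :
  sumR n (fun i => sumR m (f i)) = sumR m (fun j => sumR n (fun i => f i j)).
Proof.
  induction n as [|n IH]; simpl.
  - symmetry. apply sumR_const0.
  - rewrite IH, <- sumR_add. reflexivity.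
Qed.

Lemma sumR_mul_sumR (n : nat) (a : nat -> R) :
  sumR n (fun i => sumR n (fun j => a i * a j)) = (sumR n a) ^ 2.
Proof.
  rewrite (sumR_ext n _ (fun i => a i * sumR n a))
    by (intros; apply sumR_mull).
  rewrite (sumR_ext n _ (fun i => sumR n a * a i)) by (intros; ring).
  rewrite sumR_mull. ring.
Qed.

Lemma sumR_recl (n : nat) (f : nat -> R) :
  sumR (S n) f = f 0%nat + sumR n (fun k => f (S k)).
Proof. induction n as [|n IH]; simpl in *; [|rewrite IH]; ring. Qed.

Lemma sumR_rev (n : nat) (f : nat -> R) :
  sumR n (fun i => f (n - i)%nat) = sumR n (fun k => f (S k)).
Proof.
  induction n as [|n IH]; [reflexivity|].
  rewrite sumR_recl. simpl sumR at 2. rewrite <- IH.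
  replace (S n - 0)%nat with (S n) by lia.
  rewrite (sumR_ext n (fun i => f (S n - S i)%nat) (fun i => f (n - i)%nat)) by (intros; reflexivity).
  ring.
Qed.

Lemma sumR_geom (x : R) (n : nat) : x <> 1 ->
  sumR n (fun k => x ^ S k) = (x - x ^ S n) / (1 - x).
Proof.
  intros Hx. induction n as [|n IH].
  - simpl. field. lra.
  - change (sumR (S n) (fun k => x ^ S k)) with (sumR n (fun k => x ^ S k) + x ^ S n).
    rewrite IH. simpl. field. lra.
Qed.

Lemma sumR_kronecker (n k : nat) (b : nat -> R) : (k < n)%nat ->
  sumR n (fun l => b l * (if Nat.eq_dec l k then 1 else 0)) = b k.
Proof.
  induction n as [|n IH]; intros Hk; [lia|]. simpl.
  destruct (Nat.eq_dec n k) as [<-|Hnk].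
  - rewrite (sumR_ext n _ (fun _ => 0)), sumR_const0; [ring|].
    intros l Hl. destruct (Nat.eq_dec l n); [lia | ring].
  - rewrite IH by lia. ring.
Qed.

Lemma exp_le_mono (x y : R) : x <= y -> exp x <= exp y.
Proof. intros [Hxy|Hxy]; [left; now apply exp_increasing | subst; lra]. Qed.

Lemma Rpower_gt0 (x y : R) : 0 < Rpower x y.
Proof. apply exp_pos. Qed.

Lemma Rpower_le_nonpos (x y p : R) : p <= 0 -> 0 < x <= y -> Rpower y p <= Rpower x p.
Proof.
  intros Hp [Hx Hxy]. apply exp_le_mono.
  assert (ln x <= ln y) by (apply ln_le; lra). nra.
Qed.

Lemma Rpower_ge_self (t q : R) : 0 < t <= 1 -> q <= 1 -> t <= Rpower t q.
Proof.
  intros Ht Hq. rewrite <- (exp_ln t) at 1 by lra. apply exp_le_mono.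
  assert (ln t <= 0) by (rewrite <- ln_1; apply ln_le; lra). nra.
Qed.

(* Divide by [X + L]: both ratios lie in (0, 1], where [t <= t^q]. *)
Lemma Rpower_subadditive (X L q : R) : 0 < X -> 0 < L -> q <= 1 ->
  Rpower (X + L) q <= Rpower X q + Rpower L q.
Proof.
  intros HX HL Hq.
  assert (Hsplit : forall Y, 0 < Y ->
            Rpower Y q = Rpower (Y / (X + L)) q * Rpower (X + L) q).
  { intros Y HY. rewrite Rpower_mult_distr; [f_equal; field|..]; try lra.
    apply Rdiv_lt_0_compat; lra. }
  assert (Hratio : forall Y, 0 < Y <= X + L -> Y / (X + L) <= Rpower (Y / (X + L)) q).
  { intros Y HY. apply Rpower_ge_self; [|lra]. split.
    - apply Rdiv_lt_0_compat; lra.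
    - apply Rmult_le_reg_r with (X + L); [lra|]. field_simplify; lra. }
  rewrite (Hsplit X), (Hsplit L) by lra.
  assert (HX' := Hratio X ltac:(lra)). assert (HL' := Hratio L ltac:(lra)).
  assert (P := Rpower_gt0 (X + L) q).
  assert (X / (X + L) + L / (X + L) = 1) by (field; lra).
  nra.
Qed.

Lemma is_derive_Rpower_shift (w q u : R) : 0 < u + w ->
  is_derive (fun x => Rpower (x + w) q) u (q * Rpower (u + w) (q - 1)).
Proof.
  intros Hu. apply is_derive_Reals.
  replace (q * Rpower (u + w) (q - 1)) with (q * Rpower (u + w) (q - 1) * 1) by ring.
  apply (derivable_pt_lim_comp (fun x => x + w) (fun y => Rpower y q)).
  - replace 1 with (1 + 0) by ring.
    apply derivable_pt_lim_plus; [apply derivable_pt_lim_id | apply derivable_pt_lim_const].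
  - now apply derivable_pt_lim_power.
Qed.

Lemma is_RInt_Rpower_shift (w q a b : R) : 0 < q -> 0 < a + w -> a <= b ->
  is_RInt (fun u => Rpower (u + w) (q - 1)) a b
    ((Rpower (b + w) q - Rpower (a + w) q) / q).
Proof.
  intros Hq Ha Hab.
  replace ((Rpower (b + w) q - Rpower (a + w) q) / q)
    with (minus (/ q * Rpower (b + w) q) (/ q * Rpower (a + w) q))
    by (unfold minus, plus, opp; simpl; field; lra).
  apply (is_RInt_derive (fun x => / q * Rpower (x + w) q)); intros x Hx;
    rewrite Rmin_left, Rmax_right in Hx by lra.
  - replace (Rpower (x + w) (q - 1)) with (/ q * (q * Rpower (x + w) (q - 1)))
      by (field; lra).
    apply (is_derive_scal (fun x => Rpower (x + w) q)).
    apply is_derive_Rpower_shift. lra.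
  - apply (ex_derive_continuous (K := R_AbsRing) (V := R_NormedModule)).
    eexists. apply (is_derive_Rpower_shift w (q - 1)). lra.
Qed.

Lemma is_RInt_Rpower_dist_right (v e q a b : R) : 0 < e -> 0 < q <= 1 -> v <= a < b ->
  exists val, is_RInt (fun u => Rpower (Rabs (u - v) + e) (q - 1)) a b val /\
    val <= Rpower (b - a) q / q.
Proof.
  intros He Hq Hab.
  exists ((Rpower (b + (e - v)) q - Rpower (a + (e - v)) q) / q). split.
  - apply is_RInt_ext with (fun u => Rpower (u + (e - v)) (q - 1)).
    + intros x Hx. rewrite Rmin_left, Rmax_right in Hx by lra.
      rewrite Rabs_right by lra. f_equal. ring.
    + apply is_RInt_Rpower_shift; lra.
  - replace (b + (e - v)) with ((a + (e - v)) + (b - a)) by ring.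
    assert (Hsub := Rpower_subadditive (a + (e - v)) (b - a) q
                      ltac:(lra) ltac:(lra) ltac:(lra)).
    unfold Rdiv. apply Rmult_le_compat_r; [left; apply Rinv_0_lt_compat|]; lra.
Qed.

Lemma is_RInt_Rpower_dist_left (v e q a b : R) : 0 < e -> 0 < q <= 1 -> a < b <= v ->
  exists val, is_RInt (fun u => Rpower (Rabs (u - v) + e) (q - 1)) a b val /\
    val <= Rpower (b - a) q / q.
Proof.
  intros He Hq Hab.
  destruct (is_RInt_Rpower_dist_right (- v) e q (- b) (- a) He Hq ltac:(lra))
    as [val [Hval Hle]].
  exists val. split.
  - apply is_RInt_swap, is_RInt_comp_opp, is_RInt_opp in Hval.
    rewrite opp_opp in Hval.
    refine (is_RInt_ext _ _ _ _ _ _ Hval). intros x _.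
    rewrite opp_opp. f_equal. f_equal. rewrite <- Rabs_Ropp. f_equal. ring.
  - now replace (b - a) with (- a - - b) by ring.
Qed.

Lemma is_RInt_Rpower_dist_le (v e q a b : R) : 0 < e -> 0 < q <= 1 -> a < b ->
  exists val, is_RInt (fun u => Rpower (Rabs (u - v) + e) (q - 1)) a b val /\
    val <= 2 * Rpower (b - a) q / q.
Proof.
  intros He Hq Hab.
  assert (Hq' : 0 <= Rpower (b - a) q / q)
    by (apply Rlt_le, Rdiv_lt_0_compat; [apply Rpower_gt0 | lra]).
  destruct (Rle_lt_dec v a) as [Hva|Hav].
  { destruct (is_RInt_Rpower_dist_right v e q a b) as [val [Hi Hle]]; try lra.
    exists val. split; [exact Hi | lra]. }
  destruct (Rle_lt_dec b v) as [Hbv|Hvb].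
  { destruct (is_RInt_Rpower_dist_left v e q a b) as [val [Hi Hle]]; try lra.
    exists val. split; [exact Hi | lra]. }
  destruct (is_RInt_Rpower_dist_left v e q a v) as [val1 [Hi1 Hle1]]; try lra.
  destruct (is_RInt_Rpower_dist_right v e q v b) as [val2 [Hi2 Hle2]]; try lra.
  exists (plus val1 val2). split; [now apply (is_RInt_Chasles _ a v b)|].
  assert (Hmon : forall x, 0 < x <= b - a -> Rpower x q / q <= Rpower (b - a) q / q).
  { intros x Hx. unfold Rdiv. apply Rmult_le_compat_r.
    - left; apply Rinv_0_lt_compat; lra.
    - apply Rle_Rpower_l; lra. }
  assert (Hm1 := Hmon (v - a) ltac:(lra)). assert (Hm2 := Hmon (b - v) ltac:(lra)).
  unfold plus; simpl. lra.
Qed.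

Definition phi_const (H : R) : R := H * (2 * H - 1) * Rpower (/ 2) (2 * H - 2).

Definition phi_block_const (H : R) : R := 2 * phi_const H / (2 * H - 1).

Lemma phi_block_const_gt0 (H : R) : 1/2 < H < 1 -> 0 < phi_block_const H.
Proof.
  intros HH. unfold phi_block_const, phi_const.
  assert (P := Rpower_gt0 (/ 2) (2 * H - 2)).
  apply Rdiv_lt_0_compat; [|lra].
  apply Rmult_lt_0_compat; [lra|]. apply Rmult_lt_0_compat; [nra | exact P].
Qed.

(* [max (|y|, eps) >= (|y| + eps) / 2], and the exponent [2H - 2] is negative. *)
Lemma phi_trunc_le (H : R) (n : nat) (y : R) : 1/2 < H < 1 ->
  phi_trunc H n y <= phi_const H * Rpower (Rabs y + / INR (S n)) ((2 * H - 1) - 1).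
Proof.
  intros HH. unfold phi_trunc, phi_const.
  assert (He : 0 < / INR (S n)) by (apply Rinv_0_lt_compat, lt_0_INR; lia).
  assert (Hy := Rabs_pos y).
  replace ((2 * H - 1) - 1) with (2 * H - 2) by ring.
  rewrite (Rmult_assoc (H * (2 * H - 1))). apply Rmult_le_compat_l; [nra|].
  rewrite Rpower_mult_distr by lra.
  apply Rpower_le_nonpos; [lra|].
  assert (Rabs y <= Rmax (Rabs y) (/ INR (S n))) by apply Rmax_l.
  assert (/ INR (S n) <= Rmax (Rabs y) (/ INR (S n))) by apply Rmax_r.
  lra.
Qed.

Lemma phi_trunc_integral_le (H : R) (n : nat) (v a b F : R) : 1/2 < H < 1 -> a < b ->
  RInt_is (fun u => phi_trunc H n (u - v)) a b F ->
  F <= phi_block_const H * Rpower (b - a) (2 * H - 1).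
Proof.
  intros HH Hab [pr <-].
  assert (He : 0 < / INR (S n)) by (apply Rinv_0_lt_compat, lt_0_INR; lia).
  destruct (is_RInt_Rpower_dist_le v (/ INR (S n)) (2 * H - 1) a b He ltac:(lra) Hab)
    as [val [Hval Hle]].
  set (g := fun u => phi_const H * Rpower (Rabs (u - v) + / INR (S n)) (2 * H - 1 - 1)).
  assert (Hg : is_RInt g a b (phi_const H * val)) by exact (is_RInt_scal _ _ _ _ _ Hval).
  assert (Hc : 0 < phi_const H)
    by (apply Rmult_lt_0_compat; [nra | apply Rpower_gt0]).
  rewrite <- RInt_Reals.
  apply Rle_trans with (RInt g a b).
  - apply RInt_le; [lra | now apply ex_RInt_Reals_1 | now exists (phi_const H * val) |].
    intros x _. apply phi_trunc_le, HH.
  - rewrite (is_RInt_unique _ _ _ _ Hg). unfold phi_block_const.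
    apply Rle_trans with (phi_const H * (2 * Rpower (b - a) (2 * H - 1) / (2 * H - 1))).
    + now apply Rmult_le_compat_l; [left|].
    + right. field. lra.
Qed.

Lemma Un_cv_le_const (u : nat -> R) (l B : R) : Un_cv u l -> (forall n, u n <= B) -> l <= B.
Proof.
  intros Hu HB. destruct (Rle_lt_dec l B) as [Hle|Hlt]; [exact Hle|].
  destruct (Hu (l - B)) as [N HN]; [lra|].
  specialize (HN N (le_n N)). specialize (HB N). unfold Rdist in HN.
  apply Rabs_def2 in HN. lra.
Qed.

Lemma dbl_int_phi_le (H a b c d I : R) : 1/2 < H < 1 -> a < b -> c < d ->
  dbl_int_phi H a b c d I -> I <= phi_block_const H * Rpower (b - a) (2 * H - 1) * (d - c).
Proof.
  intros HH Hab Hcd [J [HJ HF]].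
  apply (Un_cv_le_const J); [exact HJ|]. intros n.
  destruct (HF n) as [F [HFv [pr <-]]].
  rewrite <- RInt_Reals.
  apply Rle_trans with (RInt (fun _ => phi_block_const H * Rpower (b - a) (2 * H - 1)) c d).
  - apply RInt_le; [lra | now apply ex_RInt_Reals_1 | apply ex_RInt_const |].
    intros v _. now apply (phi_trunc_integral_le H n v a b).
  - rewrite RInt_const. right. unfold scal; simpl. unfold mult; simpl. ring.
Qed.

Lemma dbl_int_phi_grid_le (H tau I : R) (i j : nat) : 1/2 < H < 1 -> 0 < tau ->
  dbl_int_phi H (INR i * tau) (INR (S i) * tau) (INR j * tau) (INR (S j) * tau) I ->
  I <= phi_block_const H * Rpower tau (2 * H - 1) * tau.
Proof.
  intros HH Htau Hij. rewrite !S_INR in Hij.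
  apply dbl_int_phi_le in Hij; [|exact HH | nra | nra].
  now replace ((INR i + 1) * tau - INR i * tau) with tau in Hij by ring;
      replace ((INR j + 1) * tau - INR j * tau) with tau in Hij by ring.
Qed.

Lemma Rpower_grid_scaling (tau lam q p : R) : 0 < tau -> 0 < lam ->
  Rpower tau (q - 1) * tau * Rpower (tau * lam) p = Rpower tau (q + p) * Rpower lam p.
Proof.
  intros Htau Hlam.
  replace (q + p) with (q - 1 + 1 + p) by ring.
  rewrite !Rpower_plus, Rpower_1, <- Rpower_mult_distr by assumption. ring.
Qed.

Lemma exp_INR_mul (n : nat) (x : R) : exp (INR n * x) = exp x ^ n.
Proof.
  induction n as [|n IH].
  - simpl. now rewrite Rmult_0_l, exp_0.
  - rewrite S_INR, <- tech_pow_Rmult, <- IH, <- exp_plus. f_equal. ring.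
Qed.

Lemma exp_opp_le_inv (z : R) : 0 <= z -> exp (- z) <= / (1 + z).
Proof.
  intros Hz. rewrite exp_Ropp.
  apply Rinv_le_contravar; [lra | apply exp_ineq1_le].
Qed.

Lemma geometric_gap_le (r s : R) (m : nat) : 0 <= s <= r -> r < 1 ->
  sumR m (fun k => r ^ S k - s ^ S k) <= r / (1 - r) - s / (1 - s).
Proof.
  intros Hsr Hr.
  rewrite sumR_sub, !sumR_geom by lra.
  assert (s ^ S m <= r ^ S m) by (apply pow_incr; lra).
  assert (0 <= s ^ S m) by (apply pow_le; lra).
  assert (s ^ S m / (1 - s) <= r ^ S m / (1 - r)).
  { unfold Rdiv. apply Rmult_le_compat; try lra.
    - left. apply Rinv_0_lt_compat. lra.
    - apply Rinv_le_contravar; lra. }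
  unfold Rdiv in *. lra.
Qed.

(* The error of [k] implicit Euler steps for [y' = -z y], [y(0) = 1]. *)
Definition euler_gap (z : R) (k : nat) : R := (/ (1 + z)) ^ k - exp (- z) ^ k.

Lemma euler_gap_ge0 (z : R) (k : nat) : 0 <= z -> 0 <= euler_gap z k.
Proof.
  intros Hz. unfold euler_gap.
  assert (exp (- z) ^ k <= (/ (1 + z)) ^ k).
  { apply pow_incr. split; [left; apply exp_pos | now apply exp_opp_le_inv]. }
  lra.
Qed.

Lemma sumR_euler_gap_le (z : R) (m : nat) : 0 < z ->
  sumR m (fun k => euler_gap z (S k)) <= Rmin 1 (/ z).
Proof.
  intros Hz. unfold euler_gap.
  assert (Hs1 := exp_ineq1_le (- z)).
  assert (Hsr := exp_opp_le_inv z ltac:(lra)).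
  assert (Hs0 := exp_pos (- z)).
  assert (Hr1 : / (1 + z) < 1) by (rewrite <- Rinv_1; apply Rinv_lt_contravar; lra).
  set (s := exp (- z)) in *. clearbody s.
  assert (Hgap := geometric_gap_le (/ (1 + z)) s m ltac:(lra) Hr1).
  replace (/ (1 + z) / (1 - / (1 + z))) with (/ z) in Hgap by (field; lra).
  assert (Hss : 0 <= s / (1 - s))
    by (apply Rmult_le_pos; [lra | left; apply Rinv_0_lt_compat; lra]).
  assert (Hs1z : / z - s / (1 - s) <= 1).
  { apply Rmult_le_reg_r with (z * (1 - s)); [apply Rmult_lt_0_compat; lra|].
    field_simplify; [lra | split; lra]. }
  apply Rmin_glb; lra.
Qed.

Lemma sq_le_Rpower_of_le_min (D z p : R) : 0 < z -> -2 <= p <= 0 ->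
  0 <= D <= Rmin 1 (/ z) -> D ^ 2 <= Rpower z p.
Proof.
  intros Hz Hp [HD0 HD].
  destruct (Rle_lt_dec z 1) as [Hz1|Hz1].
  - assert (D <= 1) by (apply Rle_trans with (Rmin 1 (/ z)); [exact HD | apply Rmin_l]).
    assert (1 <= Rpower z p).
    { rewrite <- exp_0. apply exp_le_mono.
      assert (ln z <= 0) by (rewrite <- ln_1; apply ln_le; lra). nra. }
    nra.
  - assert (D <= / z) by (apply Rle_trans with (Rmin 1 (/ z)); [exact HD | apply Rmin_r]).
    apply Rle_trans with (Rpower z (Ropp 2)).
    + rewrite Rpower_Ropp. replace 2 with (INR 2) by (simpl; ring).
      rewrite Rpower_pow, <- pow_inv by lra. apply pow_incr. lra.
    + apply Rle_Rpower; lra.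
Qed.

Definition TN_coef (tau lam : R) (m i : nat) : R :=
  exp (- (INR m * tau - INR i * tau) * lam) - (/ (1 + tau * lam)) ^ (m - i).

Lemma TN_coef_euler_gap (tau lam : R) (m i : nat) : (i <= m)%nat ->
  TN_coef tau lam m i = - euler_gap (tau * lam) (m - i).
Proof.
  intros Hi. unfold TN_coef, euler_gap. rewrite <- exp_INR_mul, minus_INR by exact Hi.
  replace (- (INR m * tau - INR i * tau) * lam) with ((INR m - INR i) * - (tau * lam)) by ring.
  ring.
Qed.

Lemma TN_coef_le0 (tau lam : R) (m i : nat) : 0 < tau -> 0 < lam -> (i <= m)%nat ->
  TN_coef tau lam m i <= 0.
Proof.
  intros Ht Hl Hi. rewrite TN_coef_euler_gap by exact Hi.
  assert (0 <= euler_gap (tau * lam) (m - i)) by (apply euler_gap_ge0; nra). lra.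
Qed.

Lemma sumR_TN_coef_sq_le (tau lam p : R) (m : nat) : 0 < tau -> 0 < lam -> -2 <= p <= 0 ->
  (sumR m (TN_coef tau lam m)) ^ 2 <= Rpower (tau * lam) p.
Proof.
  intros Ht Hl Hp.
  assert (Hz : 0 < tau * lam) by nra.
  rewrite (sumR_ext m _ (fun i => - euler_gap (tau * lam) (m - i)))
    by (intros; apply TN_coef_euler_gap; lia).
  rewrite (sumR_ext m _ (fun i => -1 * euler_gap (tau * lam) (m - i))) by (intros; ring).
  rewrite sumR_mull, (sumR_rev m (euler_gap (tau * lam))).
  replace ((-1 * sumR m (fun k => euler_gap (tau * lam) (S k))) ^ 2)
    with ((sumR m (fun k => euler_gap (tau * lam) (S k))) ^ 2) by ring.
  apply sq_le_Rpower_of_le_min; [exact Hz | exact Hp |]. split.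
  - apply sumR_ge0. intros. apply euler_gap_ge0. lra.
  - now apply sumR_euler_gap_le.
Qed.

Section SpectralCalculus.

Variable V : HilbertSpace.

Lemma hinner0l (y : V) : hinner hzero y = 0.
Proof. assert (E := hinner_add V hzero hzero y). rewrite hadd_zero in E. lra. Qed.

Lemma hinnerNl (x y : V) : hinner (hopp x) y = - hinner x y.
Proof. assert (E := hinner_add V x (hopp x) y). rewrite hadd_opp, hinner0l in E. lra. Qed.

Lemma hinner_vsuml (n : nat) (f : nat -> V) (y : V) :
  hinner (vsum n f) y = sumR n (fun k => hinner (f k) y).
Proof. induction n as [|n IH]; simpl; [apply hinner0l | now rewrite hinner_add, IH]. Qed.

Lemma hinner_hsub (x y z w : V) :
  hinner (hsub x y) (hsub z w) = hinner x z - hinner x w - hinner y z + hinner y w.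
Proof.
  unfold hsub. rewrite !hinner_add, !hinnerNl.
  rewrite (hinner_sym V x), (hinner_sym V y), !hinner_add, !hinnerNl.
  rewrite (hinner_sym V z x), (hinner_sym V w x), (hinner_sym V z y), (hinner_sym V w y).
  ring.
Qed.

Variable e : nat -> V.
Hypothesis e_orthonormal : forall k l, hinner (e k) (e l) = if Nat.eq_dec k l then 1 else 0.

Lemma hinner_vsum_basis (N : nat) (a b : nat -> R) :
  hinner (vsum N (fun k => hscal (a k) (e k))) (vsum N (fun l => hscal (b l) (e l)))
  = sumR N (fun k => a k * b k).
Proof.
  rewrite hinner_vsuml. apply sumR_ext. intros k Hk.
  rewrite hinner_scal, hinner_sym, hinner_vsuml. f_equal.
  rewrite (sumR_ext N _ (fun l => b l * (if Nat.eq_dec l k then 1 else 0))).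
  - now apply sumR_kronecker.
  - intros l _. now rewrite hinner_scal, e_orthonormal.
Qed.

Lemma hinner_funcalc (lam : nat -> R) (N : nat) (g h : R -> R) (y : V) :
  hinner (funcalc e lam N g y) (funcalc e lam N h y)
  = sumR N (fun k => g (lam k) * h (lam k) * hinner y (e k) ^ 2).
Proof.
  unfold funcalc. rewrite hinner_vsum_basis. apply sumR_ext. intros. ring.
Qed.

Lemma hinner_TN (lam : nat -> R) (N : nat) (tau : R) (m i j : nat) (y : V) :
  hinner (TN e lam N tau m i y) (TN e lam N tau m j y)
  = sumR N (fun k => TN_coef tau (lam k) m i * TN_coef tau (lam k) m j * hinner y (e k) ^ 2).
Proof.
  unfold TN, EN, RNpow. rewrite hinner_hsub, !hinner_funcalc, <- !sumR_sub, <- sumR_add.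
  apply sumR_ext. intros. unfold TN_coef. ring.
Qed.

Lemma hnorm_ANpow_sq (lam : nat -> R) (N : nat) (s : R) (y : V) :
  hnorm (ANpow e lam N s y) ^ 2 = sumR N (fun k => Rpower (lam k) (2 * s) * hinner y (e k) ^ 2).
Proof.
  unfold hnorm. rewrite pow2_sqrt by apply hinner_pos.
  unfold ANpow. rewrite hinner_funcalc. apply sumR_ext. intros.
  rewrite <- Rpower_plus. f_equal. f_equal. ring.
Qed.

End SpectralCalculus.

(* All [c k i] have the same sign, so the coefficients of the [I i j] are nonnegative. *)
Lemma sumR_gram_le (n m : nat) (c : nat -> nat -> R) (w : nat -> R) (I : nat -> nat -> R) (B : R) :
  (forall k, (k < n)%nat -> 0 <= w k) ->
  (forall k i, (k < n)%nat -> (i < m)%nat -> c k i <= 0) ->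
  (forall i j, (i < m)%nat -> (j < m)%nat -> I i j <= B) ->
  sumR m (fun i => sumR m (fun j => sumR n (fun k => c k i * c k j * w k) * I i j))
  <= B * sumR n (fun k => w k * sumR m (c k) ^ 2).
Proof.
  intros Hw Hc HI.
  apply Rle_trans with (sumR m (fun i => sumR m (fun j => B * sumR n (fun k => c k i * c k j * w k)))).
  { apply sumR_le. intros i Hi. apply sumR_le. intros j Hj.
    rewrite Rmult_comm. apply Rmult_le_compat_r; [|now apply HI].
    apply sumR_ge0. intros k Hk.
    assert (Hki := Hc k i Hk Hi). assert (Hkj := Hc k j Hk Hj). assert (Hwk := Hw k Hk).
    apply Rmult_le_pos; [nra | exact Hwk]. }
  right.
  rewrite (sumR_ext m _ (fun i => B * sumR m (fun j => sumR n (fun k => c k i * c k j * w k))))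
    by (intros; apply sumR_mull).
  rewrite sumR_mull. f_equal.
  rewrite (sumR_ext m _ (fun i => sumR n (fun k => sumR m (fun j => c k i * c k j * w k))))
    by (intros; apply sumR_swap).
  rewrite sumR_swap. apply sumR_ext. intros k _.
  rewrite <- sumR_mul_sumR, <- sumR_mull. apply sumR_ext. intros i _.
  rewrite <- sumR_mull. apply sumR_ext. intros. ring.
Qed.

Theorem mainTheorem11 :
  forall (H beta T : R), 1/2 < H < 1 -> 1 - 2 * H < beta <= 1 -> 0 < T ->
  forall (V : HilbertSpace) (e : nat -> V) (lam : nat -> R),
    (forall k l, hinner (e k) (e l) = if Nat.eq_dec k l then 1 else 0) ->
    (forall x : V, forall eps, eps > 0 -> exists n0, forall N, (N >= n0)%nat ->
        hnorm (hsub x (PN e N x)) < eps) ->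
    0 < lam 0%nat ->
    (forall k, lam k <= lam (S k)) ->
    (forall K, exists n0, forall n, (n >= n0)%nat -> lam n > K) ->
  exists C : R,
    forall (N M m : nat) (x : V),
      (1 <= M)%nat -> (1 <= m <= M)%nat ->
      let tau := T / INR M in
      forall I : nat -> nat -> R,
        (forall i j, dbl_int_phi H (INR i * tau) (INR (S i) * tau)
                                   (INR j * tau) (INR (S j) * tau) (I i j)) ->
        sumR m (fun i => sumR m (fun j =>
          hinner (TN e lam N tau m i (PN e N x)) (TN e lam N tau m j (PN e N x))
          * I i j))
        <= C * Rpower tau (2 * H + beta - 1)
             * (hnorm (ANpow e lam N ((beta - 1) / 2) (PN e N x))) ^ 2.
Proof.
  intros H beta T HH Hbeta HT V e lam Hon _ Hlam0 Hlam_mono _.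
  exists (phi_block_const H).
  intros N M m x HM Hm tau I HI.
  set (y := PN e N x). set (B := phi_block_const H * Rpower tau (2 * H - 1) * tau).
  assert (Htau : 0 < tau) by (apply Rdiv_lt_0_compat; [exact HT | apply lt_0_INR; lia]).
  assert (Hlam : forall k, 0 < lam k)
    by (induction k as [|k IH]; [exact Hlam0 | specialize (Hlam_mono k); lra]).
  assert (HB : 0 <= B).
  { assert (P1 := phi_block_const_gt0 H HH). assert (P2 := Rpower_gt0 tau (2 * H - 1)).
    unfold B. apply Rmult_le_pos; [apply Rmult_le_pos|]; lra. }
  rewrite (sumR_ext m _ (fun i => sumR m (fun j =>
             sumR N (fun k => TN_coef tau (lam k) m i * TN_coef tau (lam k) m j
                              * hinner y (e k) ^ 2) * I i j)))
    by (intros; apply sumR_ext; intros; now rewrite (hinner_TN V e Hon)).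
  apply Rle_trans with (B * sumR N (fun k => hinner y (e k) ^ 2 * Rpower (tau * lam k) (beta - 1))).
  { eapply Rle_trans.
    - apply sumR_gram_le; [intros; apply pow2_ge_0 | |].
      + intros k i _ Hi. apply TN_coef_le0; [exact Htau | apply Hlam | lia].
      + intros i j _ _. exact (dbl_int_phi_grid_le H tau (I i j) i j HH Htau (HI i j)).
    - apply Rmult_le_compat_l; [exact HB|]. apply sumR_le. intros k _.
      apply Rmult_le_compat_l; [apply pow2_ge_0|].
      apply sumR_TN_coef_sq_le; [exact Htau | apply Hlam | lra]. }
  rewrite (hnorm_ANpow_sq V e Hon), <- !sumR_mull. right. apply sumR_ext. intros k _.
  replace (2 * ((beta - 1) / 2)) with (beta - 1) by field.
  replace (2 * H + beta - 1) with (2 * H + (beta - 1)) by ring.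
  transitivity (phi_block_const H * hinner y (e k) ^ 2
                * (Rpower tau (2 * H - 1) * tau * Rpower (tau * lam k) (beta - 1)));
    [unfold B; ring|].
  rewrite Rpower_grid_scaling by auto. ring.
Qed.
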